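(* Let $(\Omega,\Sigma,\mu)$ be a finite measure space, let $X(\mu)$ be a strictly rectangular function space, let $f\in L^0(\mu)$ with $f\ge0$, and let $A_1,\dots,A_n\in\Sigma_f$ be pairwise disjoint. If $0\le a_j\le b_j$ for $j=1,\dots,n$, then $$\Big\|\sum_{j=1}^n a_j\chi_{A_j}f\Big\|\le\Big\|\sum_{j=1}^n b_j\chi_{A_j}f\Big\|.$$
   Context: $L^0(\mu)$ is the space of equivalence classes (modulo $\mu$-a.e. equality) of real $\Sigma$-measurable functions. A strictly rectangular function space is a vector subspace $X(\mu)\subseteq L^0(\mu)$ with a norm such that $\chi_Ah\in X(\mu)$ and $\|\chi_Ah\|\le\|h\|$ for all $h\in X(\mu)$, $A\in\Sigma$. $\Sigma_f=\{A\in\Sigma: f\chi_A\in X(\mu)\}$. *)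

From HB Require Import structures.
From mathcomp Require Import all_boot all_order all_algebra.
From mathcomp Require Import all_classical all_reals all_analysis.
Set Implicit Arguments. Unset Strict Implicit. Unset Printing Implicit Defensive.
Import Order.TTheory GRing.Theory Num.Theory.
Local Open Scope classical_set_scope.
Local Open Scope ring_scope.

(* Elements of L^0(mu) are represented by measurable functions T -> R;
   equality in L^0(mu) is mu-a.e. equality.  A function space X(mu) is given
   by a set X of (representatives of) functions together with a norm nrm,
   both required to be invariant under mu-a.e. equality (so they are
   well defined on equivalence classes). *)

Definition ae_eq d (T : measurableType d) (R : realType)
  (mu : {measure set T -> \bar R}) (f g : T -> R) : Prop :=
  {ae mu, forall x, f x = g x}.

Record strictly_rectangular d (T : measurableType d) (R : realType)
  (mu : {measure set T -> \bar R}) (X : set (T -> R)) (nrm : (T -> R) -> R)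
  : Prop := {
  sr_meas : forall f, X f -> measurable_fun setT f;
  sr_ae_mem : forall f g, X f -> measurable_fun setT g -> ae_eq mu f g -> X g;
  sr_ae_norm : forall f g, X f -> X g -> ae_eq mu f g -> nrm f = nrm g;
  sr_zero : X (fun _ => 0);
  sr_add : forall f g, X f -> X g -> X (f \+ g);
  sr_scale : forall (k : R) f, X f -> X (fun x => k * f x);
  sr_norm_ge0 : forall f, X f -> 0 <= nrm f;
  sr_norm_eq0 : forall f, X f -> nrm f = 0 -> ae_eq mu f (fun _ => 0);
  sr_normZ : forall (k : R) f, X f -> nrm (fun x => k * f x) = `|k| * nrm f;
  sr_normD : forall f g, X f -> X g -> nrm (f \+ g) <= nrm f + nrm g;
  sr_indic_mem : forall (A : set T) h, measurable A -> X h ->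
    X (fun x => \1_A x * h x);
  sr_indic_norm : forall (A : set T) h, measurable A -> X h ->
    nrm (fun x => \1_A x * h x) <= nrm h
}.

Definition Sigma_f d (T : measurableType d) (R : realType)
  (X : set (T -> R)) (f : T -> R) : set (set T) :=
  [set A | measurable A /\ X (fun x => f x * \1_A x)].

From HB Require Import structures.
From mathcomp Require Import all_boot all_order all_algebra.
From mathcomp Require Import all_classical all_reals all_analysis.
From mathcomp Require Import ring lra.
Set Implicit Arguments. Unset Strict Implicit. Unset Printing Implicit Defensive.
Import Order.TTheory GRing.Theory Num.Theory.
Local Open Scope classical_set_scope.
Local Open Scope ring_scope.

(* Raise the coefficients from a to b one at a time.  Lowering the j-th
   coefficient from z > 0 to y multiplies g := sum_i c_i chi_(A_i) f by y/z
   on A_j only, i.e. g - s chi_(A_j) g with s = 1 - y/z in [0, 1]; this is the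
   convex combination (1 - s) g + s chi_(~A_j) g, whose norm is at most the
   norm of g by strict rectangularity. *)

Lemma le_coordinatewise (n : nat) (T : Type) (disp : Order.disp_t)
    (R : porderType disp) (F : ('I_n -> T) -> R) (a b : 'I_n -> T) :
  (forall c j, (F [eta c with j |-> a j] <= F [eta c with j |-> b j])%O) ->
  (F a <= F b)%O.
Proof.
move=> F_step.
pose c k (i : 'I_n) := if (i < k)%N then b i else a i.
have c_step k : (F (c k) <= F (c k.+1))%O.
  have [kn|nk] := ltnP k n; last first.
    suff -> : c k.+1 = c k by [].
    by apply/funext => i; rewrite /c !(leq_trans (ltn_ord i)) // leqW.
  set j := Ordinal kn.
  have -> : c k = [eta c k with j |-> a j].
    by apply/funext => i /=; case: eqP => // ->; rewrite /c ltnn.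
  have -> : c k.+1 = [eta c k with j |-> b j].
    apply/funext => i /=; case: eqP => [->|/eqP ij]; first by rewrite /c ltnSn.
    rewrite /c ltnS leq_eqVlt; suff /negbTE -> : nat_of_ord i != k by [].
    by apply: contra ij => /eqP ik; apply/eqP/val_inj.
  exact: F_step.
have c_mono k : (F (c 0%N) <= F (c k))%O.
  by elim: k => // k IH; apply: le_trans IH (c_step k).
have -> : a = c 0%N by apply/funext => i; rewrite /c ltn0.
have -> : b = c n by apply/funext => i; rewrite /c ltn_ord.
exact: c_mono.
Qed.

Section StrictlyRectangular.
Variables (d : measure_display) (T : measurableType d) (R : realType)
  (mu : {measure set T -> \bar R}) (X : set (T -> R)) (nrm : (T -> R) -> R).
Hypothesis HX : strictly_rectangular mu X nrm.

Lemma nrm_damp_le (B : set T) (s : R) (h : T -> R) :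
  measurable B -> X h -> 0 <= s <= 1 ->
  nrm (fun x => h x - s * (\1_B x * h x)) <= nrm h.
Proof.
move=> mB Xh /andP[s_ge0 s_le1].
have XCh := sr_indic_mem HX (measurableC mB) Xh.
have -> : (fun x => h x - s * (\1_B x * h x)) =
    (fun x => (1 - s) * h x) \+ (fun x => s * (\1_(~` B) x * h x)).
  apply/funext => x /=; rewrite !indicE in_setC.
  by case: (x \in B) => /=; ring.
apply: le_trans (sr_normD HX (sr_scale HX _ Xh) (sr_scale HX _ XCh)) _.
rewrite !(sr_normZ HX) // !ger0_norm ?subr_ge0 //.
have := ler_wpM2l s_ge0 (sr_indic_norm HX (measurableC mB) Xh); lra.
Qed.

Variables (f : T -> R) (n : nat) (A : 'I_n -> set T).
Hypothesis HA : forall j, Sigma_f X f (A j).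
Hypothesis Hdisj : forall i j, i != j -> A i `&` A j = set0.

Let comb (c : 'I_n -> R) : T -> R := fun x => \sum_(j < n) c j * \1_(A j) x * f x.

Lemma mem_comb c : X (comb c).
Proof.
rewrite /comb -fct_sumE; apply: (big_ind X) => [|g h|j _].
- exact: sr_zero HX.
- exact: (sr_add HX).
- have -> : (fun x => c j * \1_(A j) x * f x) = fun x => c j * (f x * \1_(A j) x).
    by apply/funext => x; rewrite mulrAC mulrA.
  exact/(sr_scale HX)/(HA j).2.
Qed.

Lemma indic_comb c j x : \1_(A j) x * comb c x = c j * \1_(A j) x * f x.
Proof.
have indicM i : \1_(A j) x * (c i * \1_(A i) x * f x) = c i * \1_(A j `&` A i) x * f x.
  by rewrite indicI /=; ring.
rewrite /comb big_distrr (bigD1 j) //= big1 => [|i ij]; rewrite indicM.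
- by rewrite setIid addr0.
- by rewrite Hdisj 1?eq_sym // indic0 /= mulr0 mul0r.
Qed.

Lemma comb_update_sub c j y z x :
  comb [eta c with j |-> z] x - comb [eta c with j |-> y] x =
  (z - y) * \1_(A j) x * f x.
Proof.
rewrite /comb -sumrB (bigD1 j) //= eqxx big1 ?addr0 => [|i /negbTE ij]; first by ring.
by rewrite /= ij subrr.
Qed.

Lemma nrm_comb_update_le c j y z : 0 <= y <= z ->
  nrm (comb [eta c with j |-> y]) <= nrm (comb [eta c with j |-> z]).
Proof.
move=> /andP[y_ge0 le_yz]; set cz := [eta c with j |-> z].
have [z0|z_neq0] := eqVneq z 0.
  have y0 : y = 0 by apply/eqP; rewrite eq_le y_ge0 -z0 le_yz.
  by rewrite /cz y0 z0.
have z_gt0 : 0 < z by rewrite lt_neqAle eq_sym z_neq0 (le_trans y_ge0).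
have -> : comb [eta c with j |-> y] =
    fun x => comb cz x - (1 - y / z) * (\1_(A j) x * comb cz x).
  apply/funext => x; have := comb_update_sub c j y z x; rewrite -/cz => cz_sub.
  rewrite indic_comb /cz /= eqxx -/cz.
  have -> : (1 - y / z) * (z * \1_(A j) x * f x) = (z - y) * \1_(A j) x * f x.
    by field; rewrite gt_eqF.
  by rewrite -cz_sub; ring.
apply: nrm_damp_le (HA j).1 (mem_comb cz) _.
by rewrite subr_ge0 ler_pdivrMr // mul1r le_yz lerBlDr lerDl divr_ge0 // ltW.
Qed.

End StrictlyRectangular.

Theorem lemma3p3 (d : measure_display) (T : measurableType d) (R : realType)
  (mu : {finite_measure set T -> \bar R})
  (X : set (T -> R)) (nrm : (T -> R) -> R)
  (HX : strictly_rectangular mu X nrm)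
  (f : T -> R) (mf : measurable_fun setT f)
  (f_ge0 : {ae mu, forall x, 0 <= f x})
  (n : nat) (A : 'I_n -> set T)
  (HA : forall j, Sigma_f X f (A j))
  (Hdisj : forall i j, i != j -> A i `&` A j = set0)
  (a b : 'I_n -> R)
  (Hab : forall j, 0 <= a j /\ a j <= b j) :
  nrm (fun x => \sum_(j < n) a j * \1_(A j) x * f x)
    <= nrm (fun x => \sum_(j < n) b j * \1_(A j) x * f x).
Proof.
apply: (le_coordinatewise (F := fun c => nrm (fun x => \sum_(j < n) c j * \1_(A j) x * f x))).
move=> c j; have [a_ge0 le_ab] := Hab j.
have ab_j : 0 <= a j <= b j by rewrite a_ge0 le_ab.
exact (nrm_comb_update_le HX HA Hdisj c j ab_j).
Qed.
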